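(* Let $\Sigma$ be a ranked alphabet, $B$ a strong bimonoid, $\mathcal{A}=(Q,\delta,F)$ a $(\Sigma,B)$-wta and $q_1,\dots,q_n$ an enumeration of the elements of $Q$. Then there is a final variant $\mathcal{C}$ of $\mathrm{acc}\big(\Pi\big((\mathrm{der}(h^{q_i}_{\mathrm{V}(\mathcal{A})})\mid i\in[n])\big)\big)$ such that $\mathcal{N}(\mathcal{A})$ and $\mathcal{C}$ are isomorphic.
   Context: Ranked alphabet $\Sigma$ ($\Sigma^{(0)}\ne\emptyset$), trees $T_\Sigma$; strong bimonoid $(B,\oplus,\otimes,\mathbb{0},\mathbb{1})$ (commutative monoid $(B,\oplus,\mathbb{0})$, monoid $(B,\otimes,\mathbb{1})$, $\mathbb{0}\ne\mathbb{1}$, $\mathbb{0}$ absorbing, no distributivity). $(\Sigma,B)$-wta $\mathcal{A}=(Q,\delta,F)$: $Q$ finite nonempty, $\delta_k:Q^k\times\Sigma^{(k)}\times Q\to B$, $F:Q\to B$. Vector algebra $\mathrm{V}(\mathcal{A})=(B^Q,\delta_{\mathcal{A}})$, $\delta_{\mathcal{A}}(\sigma)(v_1,\dots,v_k)_q=\bigoplus_{p_1,\dots,p_k}\big(\bigotimes_{i=1}^k(v_i)_{p_i}\big)\otimes\delta_k(p_1\dots p_k,\sigma,q)$; $h_{\mathrm{V}(\mathcal{A})}:T_\Sigma\to B^Q$ the unique homomorphism from the term algebra; $h^q_{\mathrm{V}(\mathcal{A})}:T_\Sigma\to B$, $h^q_{\mathrm{V}(\mathcal{A})}(\xi)=h_{\mathrm{V}(\mathcal{A})}(\xi)_q$.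 A $(\Sigma,B)$-algebra is $\mathcal{K}=(P,\theta,G)$, $(P,\theta)$ a $\Sigma$-algebra, $G:P\to B$; $h_{\mathcal{K}}:T_\Sigma\to P$ the unique homomorphism. A final variant of $\mathcal{K}$ is $(P,\theta,G')$ for any $G':P\to B$. $\mathrm{acc}(\mathcal{K})$ is the $(\Sigma,B)$-subalgebra with carrier $\mathrm{im}(h_{\mathcal{K}})$ (the smallest subalgebra), restricted operations and restricted $G$. Two $(\Sigma,B)$-algebras $(P,\theta,G)$, $(P',\theta',G')$ are isomorphic if there is a bijective $\Sigma$-algebra homomorphism $\varphi:P\to P'$ with $G_p=G'_{\varphi(p)}$ for all $p$. Direct product $\Pi((\mathcal{K}_i)_{i\in[n]})$ of $\mathcal{K}_i=(P_i,\theta_i,G_i)$: carrier $P_1\times\dots\times P_n$, componentwise operations, root weight $(p_1,\dots,p_n)\mapsto\bigotimes_{i=1}^n(G_i)_{p_i}$. Contexts: trees over $\Sigma\cup\{\square\}$ with exactly one occurrence of the new nullary symbol $\square$ (set $C_\Sigma$); $c[\xi]$ substitutes $\xi$ for $\square$. For $r:T_\Sigma\to B$ and $\xi\in T_\Sigma$, $\xi^{-1}r:C_\Sigma\to B$, $(\xi^{-1}r)(c)=r(c[\xi])$. The derivative algebra $\mathrm{der}(r)$ has carrier $\{\xi^{-1}r\mid\xi\in T_\Sigma\}$, operations $\theta(\sigma)(\xi_1^{-1}r,\dots,\xi_k^{-1}r)=\sigma(\xi_1,\dots,\xi_k)^{-1}r$, root weights $\xi^{-1}r\mapsto r(\xi)$.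 Nerode algebra $\mathcal{N}(\mathcal{A})=(Q_{\mathcal{N}},\theta_{\mathcal{N}},F_{\mathcal{N}})$: smallest subalgebra of $\mathrm{V}(\mathcal{A})$ with $(F_{\mathcal{N}})_v=\bigoplus_q v_q\otimes F_q$. *)

From mathcomp Require Import all_boot.
From Stdlib Require Import ClassicalEpsilon FunctionalExtensionality.
Set Implicit Arguments.
Unset Strict Implicit.
Unset Printing Implicit Defensive.

Record ranked_alphabet := RankedAlphabet {
  ra_sym :> finType;
  ra_rank : ra_sym -> nat;
  ra_nullary : exists s, ra_rank s = 0 }.

Inductive tree (S : ranked_alphabet) : Type :=
  Node (s : S) (ts : 'I_(ra_rank s) -> tree S).
Arguments Node {S} s ts.

Record strong_bimonoid := StrongBimonoid {
  sb_car :> Type;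
  sb_add : sb_car -> sb_car -> sb_car;
  sb_mul : sb_car -> sb_car -> sb_car;
  sb_zero : sb_car;
  sb_one : sb_car;
  sb_addA : forall x y z, sb_add x (sb_add y z) = sb_add (sb_add x y) z;
  sb_addC : forall x y, sb_add x y = sb_add y x;
  sb_add0 : forall x, sb_add sb_zero x = x;
  sb_mulA : forall x y z, sb_mul x (sb_mul y z) = sb_mul (sb_mul x y) z;
  sb_mul1l : forall x, sb_mul sb_one x = x;
  sb_mul1r : forall x, sb_mul x sb_one = x;
  sb_mul0l : forall x, sb_mul sb_zero x = sb_zero;
  sb_mul0r : forall x, sb_mul x sb_zero = sb_zero;
  sb_zero_neq_one : sb_zero <> sb_one }.

Definition sig_ops (S : ranked_alphabet) (P : Type) :=
  forall s : S, ('I_(ra_rank s) -> P) -> P.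

Fixpoint hom (S : ranked_alphabet) (P : Type) (op : sig_ops S P) (t : tree S) : P :=
  match t with Node s ts => op s (fun i => hom op (ts i)) end.

Record sbalg (S : ranked_alphabet) (B : strong_bimonoid) := SBAlg {
  alg_car : Type;
  alg_op : sig_ops S alg_car;
  alg_root : alg_car -> B }.
Arguments SBAlg {S B} alg_car alg_op alg_root.
Arguments alg_car {S B} s.
Arguments alg_op {S B} s _ _.
Arguments alg_root {S B} s _.

Definition h_alg S B (K : sbalg S B) : tree S -> alg_car K := hom (alg_op K).

Definition final_variant S B (K : sbalg S B) (G' : alg_car K -> B) : sbalg S B :=
  SBAlg (alg_car K) (alg_op K) G'.

Definition acc_car S B (K : sbalg S B) : Type := {p : alg_car K | exists t, h_alg K t = p}.

Lemma acc_closed S B (K : sbalg S B) (s : S) (ps : 'I_(ra_rank s) -> acc_car K) :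
  exists t, h_alg K t = alg_op K s (fun i => sval (ps i)).
Proof.
pose ts := fun i => proj1_sig (constructive_indefinite_description _ (proj2_sig (ps i))).
exists (Node s ts); rewrite /h_alg /=; congr (alg_op K s); apply: (@functional_extensionality_dep _ _).
move=> i; rewrite /ts; case: constructive_indefinite_description => t ht /=.
exact: ht.
Qed.

Definition acc S B (K : sbalg S B) : sbalg S B :=
  SBAlg (acc_car K)
        (fun s ps => exist _ (alg_op K s (fun i => sval (ps i))) (acc_closed ps))
        (fun p => alg_root K (sval p)).

Definition sbalg_iso S B (K K' : sbalg S B) : Prop :=
  exists phi : alg_car K -> alg_car K',
    [/\ bijective phi,
        (forall s ps, phi (alg_op K s ps) = alg_op K' s (fun i => phi (ps i))) &
        (forall p, alg_root K p = alg_root K' (phi p))].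

Definition prod_alg S B (n : nat) (K : 'I_n -> sbalg S B) : sbalg S B :=
  SBAlg (forall i : 'I_n, alg_car (K i))
        (fun s ps => fun i => alg_op (K i) s (fun j => ps j i))
        (fun p => \big[@sb_mul B/sb_one B]_(i < n) alg_root (K i) (p i)).

Definition box_alphabet (S : ranked_alphabet) : ranked_alphabet :=
  @RankedAlphabet (option S)%type
    (fun o => if o is Some s then ra_rank s else 0) (ex_intro _ None erefl).

Fixpoint count_box S (c : tree (box_alphabet S)) : nat :=
  match c with
  | Node o ts => (if o is None then 1 else 0) + \sum_(i < _) count_box (ts i)
  end.

Definition context (S : ranked_alphabet) : Type :=
  {c : tree (box_alphabet S) | count_box c = 1}.

Fixpoint subst S (c : tree (box_alphabet S)) (xi : tree S) : tree S :=
  match c with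
  | Node o ts =>
    match o as o' return ('I_(ra_rank (r:=box_alphabet S) o') -> tree (box_alphabet S)) -> tree S with
    | None => fun _ => xi
    | Some s => fun ts' => Node s (fun i => subst (ts' i) xi)
    end ts
  end.

Definition deriv S (B : strong_bimonoid) (r : tree S -> B) (xi : tree S) : context S -> B :=
  fun c => r (subst (sval c) xi).

Definition der_car S (B : strong_bimonoid) (r : tree S -> B) : Type :=
  {f : context S -> B | exists xi, deriv r xi = f}.

Definition der_rep S (B : strong_bimonoid) (r : tree S -> B) (f : der_car r) : tree S :=
  proj1_sig (constructive_indefinite_description _ (proj2_sig f)).

Definition der_mk S (B : strong_bimonoid) (r : tree S -> B) (xi : tree S) : der_car r :=
  exist _ (deriv r xi) (ex_intro _ xi erefl).

(* der(r); operations and root weights via representatives (well defined) *)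
Definition der_alg S (B : strong_bimonoid) (r : tree S -> B) : sbalg S B :=
  SBAlg (der_car r)
        (fun s fs => der_mk r (Node s (fun i => der_rep (fs i))))
        (fun f => r (der_rep f)).

Record wta (S : ranked_alphabet) (B : strong_bimonoid) := Wta {
  wta_Q : finType;
  wta_Q_nonempty : 0 < #|wta_Q|;
  wta_delta : forall s : S, {ffun 'I_(ra_rank s) -> wta_Q} -> wta_Q -> B;
  wta_F : wta_Q -> B }.
Arguments wta_Q {S B} w.
Arguments wta_delta {S B} w s _ _.
Arguments wta_F {S B} w _.

Definition vec_op S B (A : wta S B) : sig_ops S (wta_Q A -> B) :=
  fun s vs q =>
    \big[@sb_add B/sb_zero B]_(p : {ffun 'I_(ra_rank s) -> wta_Q A})
       sb_mul (\big[@sb_mul B/sb_one B]_(i < ra_rank s) vs i (p i)) (wta_delta A s p q).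

Definition h_V S B (A : wta S B) : tree S -> (wta_Q A -> B) := hom (@vec_op S B A).
Arguments h_V {S B} A _ _.

Definition h_Vq S B (A : wta S B) (q : wta_Q A) : tree S -> B := fun xi => h_V A xi q.
Arguments h_Vq {S B} A q _.

Definition vec_alg_FN S B (A : wta S B) : sbalg S B :=
  SBAlg (wta_Q A -> B) (@vec_op S B A)
        (fun v => \big[@sb_add B/sb_zero B]_(q : wta_Q A) sb_mul (v q) (wta_F A q)).

Definition nerode S B (A : wta S B) : sbalg S B := acc (vec_alg_FN A).

Arguments final_variant {S B} K G'.
Arguments sbalg_iso {S B} K K'.
Arguments acc {S B} K.
Arguments nerode {S B} A.
Arguments prod_alg {S B n} K.
Arguments der_alg {S B} r.

From Stdlib Require Import ProofIrrelevance FunctionalExtensionality ClassicalEpsilon.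
From mathcomp Require Import all_boot.
Set Implicit Arguments.
Unset Strict Implicit.
Unset Printing Implicit Defensive.

(* Both the Nerode algebra and acc(Π der(h^q)) are images of the term algebra,
   so they are isomorphic as Σ-algebras as soon as their term homomorphisms have
   the same kernel, and the root weights of the Nerode algebra can then be
   transported along the isomorphism.  Two trees have the same image in the
   product iff they have the same derivative w.r.t. every h^q; plugging them
   into the trivial context [□] shows this forces h_V(ξ) = h_V(ξ'), and
   conversely h_V(c[ξ]) depends only on h_V(ξ).  The one delicate point is that
   der(r) is computed through chosen representatives, so one needs the
   derivative relation to be a congruence; this is shown by replacing the
   arguments of a node one at a time, each time inside a one-hole context. *)

Lemma sval_inj (T : Type) (P : T -> Prop) : injective (@sval T P).
Proof. by case=> [a pa] [b pb] /= eq_ab; apply: subset_eq_compat. Qed.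

Section Accessible.
Variables (S : ranked_alphabet) (B : strong_bimonoid) (K : sbalg S B).

Definition acc_mk (t : tree S) : acc_car K := exist _ (h_alg K t) (ex_intro _ t erefl).

Definition acc_rep (x : acc_car K) : tree S :=
  proj1_sig (constructive_indefinite_description _ (proj2_sig x)).

Lemma acc_mk_rep (x : acc_car K) : acc_mk (acc_rep x) = x.
Proof. by apply: sval_inj; rewrite /acc_rep; case: constructive_indefinite_description. Qed.

Lemma acc_op_mk (s : S) (ts : 'I_(ra_rank s) -> tree S) :
  alg_op (acc K) s (fun i => acc_mk (ts i)) = acc_mk (Node s ts).
Proof. exact: sval_inj. Qed.

End Accessible.

Section AccMap.
Variables (S : ranked_alphabet) (B : strong_bimonoid) (K K' : sbalg S B).
Hypothesis ker_sub : forall t t', h_alg K t = h_alg K t' -> h_alg K' t = h_alg K' t'.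

Definition acc_map (x : acc_car K) : acc_car K' := acc_mk K' (acc_rep x).

Lemma acc_map_mk (t : tree S) : acc_map (acc_mk K t) = acc_mk K' t.
Proof.
apply: sval_inj; apply: ker_sub.
exact: (congr1 sval (acc_mk_rep (acc_mk K t))).
Qed.

Lemma acc_map_op (s : S) (ps : 'I_(ra_rank s) -> acc_car K) :
  acc_map (alg_op (acc K) s ps) = alg_op (acc K') s (fun i => acc_map (ps i)).
Proof.
have -> : ps = fun i => acc_mk K (acc_rep (ps i)).
  by apply: functional_extensionality => i; rewrite acc_mk_rep.
rewrite acc_op_mk acc_map_mk -acc_op_mk; apply: (congr1 (alg_op (acc K') s)).
by apply: functional_extensionality => i; rewrite acc_map_mk.
Qed.

End AccMap.

Lemma acc_iso_of_ker_eq (S : ranked_alphabet) (B : strong_bimonoid) (K K' : sbalg S B) :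
  (forall t t', h_alg K t = h_alg K t' <-> h_alg K' t = h_alg K' t') ->
  exists G', sbalg_iso (acc K) (final_variant (acc K') G').
Proof.
move=> ker_eq.
have sub t t' : h_alg K t = h_alg K t' -> h_alg K' t = h_alg K' t' by move/ker_eq.
have sub' t t' : h_alg K' t = h_alg K' t' -> h_alg K t = h_alg K t' by move/ker_eq.
have mapK : cancel (acc_map K') (acc_map K).
  by move=> x; rewrite -(acc_mk_rep x) (acc_map_mk sub) (acc_map_mk sub').
have map'K : cancel (acc_map K) (acc_map K').
  by move=> x; rewrite -(acc_mk_rep x) (acc_map_mk sub') (acc_map_mk sub).
exists (fun y => alg_root (acc K) (acc_map K y)), (acc_map K'); split.
- exact: Bijective mapK map'K.
- exact: (acc_map_op sub).
- by move=> x; rewrite -{1}(mapK x).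
Qed.

Definition fupd (T : Type) (k : nat) (f : 'I_k -> T) (j : 'I_k) (x : T) : 'I_k -> T :=
  fun i => if i == j then x else f i.

Lemma eq_by_fupd (T U : Type) (k : nat) (E : ('I_k -> T) -> U) (R : T -> T -> Prop)
    (f g : 'I_k -> T) :
  (forall h j x, R (h j) x -> E h = E (fupd h j x)) ->
  (forall i, R (f i) (g i)) -> E f = E g.
Proof.
move=> E_fupd Rfg.
pose mix m (i : 'I_k) := if i < m then g i else f i.
have E_mix : forall m, m <= k -> E f = E (mix m).
  elim=> [//|m IH lt_mk].
  rewrite (IH (ltnW lt_mk)).
  have -> : mix m.+1 = fupd (mix m) (Ordinal lt_mk) (g (Ordinal lt_mk)).
    apply: functional_extensionality => i; rewrite /mix /fupd ltnS leq_eqVlt.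
    case: (i =P Ordinal lt_mk) => [-> | /eqP ne]; first by rewrite eqxx.
    by move: ne; rewrite -val_eqE /= => /negbTE ->.
  by apply: E_fupd; rewrite /mix ltnn.
have -> : g = mix k by apply: functional_extensionality => i; rewrite /mix ltn_ord.
exact: E_mix.
Qed.

Section Contexts.
Variable S : ranked_alphabet.
Notation btree := (tree (box_alphabet S)).

Fixpoint lift (t : tree S) : btree :=
  match t with Node s ts => @Node (box_alphabet S) (Some s) (fun i => lift (ts i)) end.

Lemma count_box_lift (t : tree S) : count_box (lift t) = 0.
Proof. by elim: t => s ts IH /=; rewrite add0n big1. Qed.

Lemma subst_lift (t : tree S) (xi : tree S) : subst (lift t) xi = t.
Proof. by elim: t => s ts IH /=; congr Node; apply: functional_extensionality. Qed.

Fixpoint csubst (c d : btree) : btree :=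
  match c with
  | Node o ts =>
    match o as o' return ('I_(ra_rank (r:=box_alphabet S) o') -> btree) -> btree with
    | None => fun _ => d
    | Some s => fun ts' => @Node (box_alphabet S) (Some s) (fun i => csubst (ts' i) d)
    end ts
  end.

Lemma subst_csubst (c d : btree) (xi : tree S) : subst (csubst c d) xi = subst c (subst d xi).
Proof.
elim: c => [[s|] ts IH] //=.
by congr Node; apply: functional_extensionality.
Qed.

Lemma count_box_csubst (c d : btree) : count_box (csubst c d) = count_box c * count_box d.
Proof.
elim: c => [[s|] ts IH] /=; last by rewrite big_ord0 addn0 mul1n.
by rewrite !add0n big_distrl; apply: eq_bigr.
Qed.

Definition ctx_at (s : S) (ts : 'I_(ra_rank s) -> tree S) (k : 'I_(ra_rank s)) : btree :=
  @Node (box_alphabet S) (Some s)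
    (fun j => if j == k then @Node (box_alphabet S) None (fun _ => lift (ts j)) else lift (ts j)).

Lemma count_box_ctx_at (s : S) (ts : 'I_(ra_rank s) -> tree S) (k : 'I_(ra_rank s)) :
  count_box (ctx_at ts k) = 1.
Proof.
rewrite /= add0n (bigD1 k) //= eqxx /= big_ord0 big1 // => j /negbTE ->.
exact: count_box_lift.
Qed.

Lemma subst_ctx_at (s : S) (ts : 'I_(ra_rank s) -> tree S) (k : 'I_(ra_rank s)) (xi : tree S) :
  subst (ctx_at ts k) xi = Node s (fupd ts k xi).
Proof.
rewrite /=; congr Node; apply: functional_extensionality => j; rewrite /fupd.
by case: (j == k); rewrite ?subst_lift.
Qed.

Definition box_tree : btree := @Node (box_alphabet S) None (ffun0 (card_ord 0)).

Lemma count_box_box_tree : count_box box_tree = 1.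
Proof. by rewrite /= big_ord0. Qed.

Definition box_ctx : context S := exist _ box_tree count_box_box_tree.

Section Derivatives.
Variables (B : strong_bimonoid) (r : tree S -> B).

Lemma deriv_box (t : tree S) : deriv r t box_ctx = r t.
Proof. by []. Qed.

Lemma deriv_fupd (s : S) (ts : 'I_(ra_rank s) -> tree S) (k : 'I_(ra_rank s)) (t : tree S) :
  deriv r (ts k) = deriv r t -> deriv r (Node s ts) = deriv r (Node s (fupd ts k t)).
Proof.
move=> eq_k; apply: functional_extensionality => c.
(* c[σ(.., t, ..)] is (c[σ(.., □, ..)])[t], and c[σ(.., □, ..)] is again a context *)
have -> : Node s ts = subst (ctx_at ts k) (ts k).
  rewrite subst_ctx_at; congr Node; apply: functional_extensionality => j.
  by rewrite /fupd; case: eqP => [->|].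
have c1 : count_box (csubst (sval c) (ctx_at ts k)) = 1.
  by rewrite count_box_csubst count_box_ctx_at (svalP c).
rewrite /deriv -subst_ctx_at -!subst_csubst.
exact: (congr1 (fun d => d (exist _ _ c1)) eq_k).
Qed.

Lemma deriv_congr (s : S) (ts ts' : 'I_(ra_rank s) -> tree S) :
  (forall i, deriv r (ts i) = deriv r (ts' i)) -> deriv r (Node s ts) = deriv r (Node s ts').
Proof.
apply: (eq_by_fupd (E := fun f => deriv r (Node s f)) (R := fun t t' => deriv r t = deriv r t')).
exact: deriv_fupd.
Qed.

Lemma deriv_der_rep (f : der_car r) : deriv r (der_rep f) = sval f.
Proof. by rewrite /der_rep; case: constructive_indefinite_description. Qed.

Lemma h_der_alg (t : tree S) : sval (h_alg (der_alg r) t) = deriv r t.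
Proof.
rewrite /h_alg; elim: t => s ts IH /=.
by apply: deriv_congr => i; rewrite deriv_der_rep IH.
Qed.

End Derivatives.

Lemma hom_subst (P : Type) (op : sig_ops S P) (c : btree) (t t' : tree S) :
  hom op t = hom op t' -> hom op (subst c t) = hom op (subst c t').
Proof.
move=> eq_t; elim: c => [[s|] ts IH] //=.
by congr (op s); apply: functional_extensionality.
Qed.

End Contexts.

Lemma h_prod_alg (S : ranked_alphabet) (B : strong_bimonoid) (n : nat)
    (K : 'I_n -> sbalg S B) (t : tree S) (i : 'I_n) :
  h_alg (prod_alg K) t i = h_alg (K i) t.
Proof.
rewrite /h_alg; elim: t => s ts IH /=.
by congr (alg_op (K i) s); apply: functional_extensionality.
Qed.

Lemma ker_h_prod_der_alg (S : ranked_alphabet) (B : strong_bimonoid) (K : sbalg S B)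
    (n : nat) (f : 'I_n -> alg_car K -> B) :
  (forall x y, (forall i, f i x = f i y) -> x = y) ->
  forall t t',
    h_alg (prod_alg (fun i => der_alg (fun u => f i (h_alg K u)))) t =
    h_alg (prod_alg (fun i => der_alg (fun u => f i (h_alg K u)))) t'
    <-> h_alg K t = h_alg K t'.
Proof.
move=> f_inj t t'; split=> [eq_P | eq_K].
- apply: f_inj => i.
  have /(congr1 sval) := congr1 (fun p => p i) eq_P.
  rewrite !h_prod_alg !h_der_alg => /(congr1 (fun d => d (box_ctx S))).
  by rewrite !deriv_box.
- apply: functional_extensionality_dep => i; apply: sval_inj.
  rewrite !h_prod_alg !h_der_alg; apply: functional_extensionality => c.
  by rewrite /deriv /h_alg (hom_subst _ eq_K).
Qed.

Theorem theorem6p7 (S : ranked_alphabet) (B : strong_bimonoid) (A : wta S B)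
  (n : nat) (q : 'I_n -> wta_Q A) (hq : bijective q) :
  exists G' : alg_car (acc (prod_alg (fun i : 'I_n => der_alg (h_Vq A (q i))))) -> B,
    sbalg_iso (nerode A)
      (final_variant (acc (prod_alg (fun i : 'I_n => der_alg (h_Vq A (q i))))) G').
Proof.
apply: acc_iso_of_ker_eq => t t'; symmetry.
apply: (ker_h_prod_der_alg (K := vec_alg_FN A) (f := fun i v => v (q i))).
move=> v w eq_vw; apply: functional_extensionality => p.
by case: hq => g _ gK; rewrite -(gK p).
Qed.
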